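(* Let $\mathcal G$ be a finite connected groupoid and $\alpha=(S_g,\alpha_g)_{g\in\mathcal G}$ a unital group-type partial action of $\mathcal G$ on a commutative ring $S=\bigoplus_{y\in\mathcal G_0}S_y$, with $S_g=S1_g$ and $1_g\ne0$ for all $g$. If $S^{\alpha_{\mathcal G}}\subseteq S$ is an $\alpha$-partial Galois extension, then for every $y\in\mathcal G_0$, $S_y^{\alpha_{\mathcal G(y)}}\subseteq S_y$ is an $\alpha_{\mathcal G(y)}$-partial Galois extension, where $\alpha_{\mathcal G(y)}=(S_g,\alpha_g)_{g\in\mathcal G(y)}$ is the partial action of the isotropy group $\mathcal G(y)$ on $S_y$.
   Context: A groupoid is a small category with all morphisms invertible; $\mathcal G_0$ is its object set (identified with identity morphisms), $s(g),t(g)$ source and target, $\mathcal G(x,y)=\{g:s(g)=x,t(g)=y\}$, $\mathcal G(y)=\mathcal G(y,y)$; connected means all $\mathcal G(x,y)\neq\emptyset$. A partial action $\alpha=(S_g,\alpha_g)_{g\in\mathcal G}$ on a ring $S$: for each $g$, $S_{t(g)}$ is an ideal of $S$, $S_g$ an ideal of $S_{t(g)}$, $\alpha_g:S_{g^{-1}}\to S_g$ a ring isomorphism; $\alpha_x=\mathrm{id}_{S_x}$; for composable $(g,h)$ (i.e. $s(g)=t(h)$), $\alpha_h^{-1}(S_{g^{-1}}\cap S_h)\subseteq S_{(gh)^{-1}}$ and $\alpha_g\alpha_h(a)=\alpha_{gh}(a)$ there. Unital: $S_g=S1_g$, $1_g$ central idempotent. Group-type: there exist $x\in\mathcal G_0$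 and $\tau_y\in\mathcal G(x,y)$ ($y\in\mathcal G_0$, $\tau_x=x$) with $S_{\tau_y^{-1}}=S_x$, $S_{\tau_y}=S_y$ for all $y$. For a partial action $\beta=(A_g,\beta_g)_{g\in\mathcal K}$ of a groupoid (or group) $\mathcal K$ on a ring $A$, $A^{\beta}=\{a\in A:\beta_g(a1_{g^{-1}})=a1_g\ \forall g\in\mathcal K\}$, and $A^\beta\subseteq A$ is a $\beta$-partial Galois extension if there exist $m\ge1$, $a_i,b_i\in A$ with $\sum_{i=1}^m a_i\beta_g(b_i1_{g^{-1}})=\delta_{z,g}1_z$ for all $z\in\mathcal K_0$, $g\in\mathcal K$, i.e. the sum equals $1_g$ if $g$ is an identity and $0$ otherwise. *)

From HB Require Import structures.
From mathcomp Require Import all_boot all_order all_algebra.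
Set Implicit Arguments. Unset Strict Implicit. Unset Printing Implicit Defensive.
Import GRing.Theory.
Local Open Scope ring_scope.

Record groupoid := Groupoid {
  mor : finType;
  obj : finType;
  src : mor -> obj;
  tgt : mor -> obj;
  gid : obj -> mor;
  gmul : mor -> mor -> mor;   (* gmul g h = gh, meaningful when src g = tgt h *)
  ginv : mor -> mor;
  src_id : forall x, src (gid x) = x;
  tgt_id : forall x, tgt (gid x) = x;
  src_mul : forall g h, src g = tgt h -> src (gmul g h) = src h;
  tgt_mul : forall g h, src g = tgt h -> tgt (gmul g h) = tgt g;
  mulA : forall g h k, src g = tgt h -> src h = tgt k ->
    gmul (gmul g h) k = gmul g (gmul h k);
  mul_idl : forall g, gmul (gid (tgt g)) g = g;
  mul_idr : forall g, gmul g (gid (src g)) = g;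
  src_inv : forall g, src (ginv g) = tgt g;
  tgt_inv : forall g, tgt (ginv g) = src g;
  mulVg : forall g, gmul (ginv g) g = gid (src g);
  mulgV : forall g, gmul g (ginv g) = gid (tgt g)
}.

Definition connected_groupoid (G : groupoid) : Prop :=
  forall x y : obj G, exists g : mor G, src g = x /\ tgt g = y.

Definition is_ident (G : groupoid) (g : mor G) : bool := [exists x, g == gid x].

(* the principal ideal S e = S 1_g *)
Definition inI (S : comPzRingType) (e a : S) : Prop := exists b, a = b * e.

(* A unital partial action alpha = (S_g, alpha_g) of G on S, with S_g = S 1_g,
   1_g = one g an (automatically central) idempotent, alpha_g : S_{g^-1} -> S_g. *)
Definition unital_partial_action (G : groupoid) (S : comPzRingType)
    (one : mor G -> S) (alpha : mor G -> S -> S) : Prop :=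
  [/\ (forall g, one g * one g = one g),
      (forall g a, inI (one g) a -> inI (one (gid (tgt g))) a),
      (* alpha_g : S_{g^-1} -> S_g is a ring isomorphism *)
      (forall g a, inI (one (ginv g)) a -> inI (one g) (alpha g a)) &
    [/\ (forall g a b, inI (one (ginv g)) a -> inI (one (ginv g)) b ->
         alpha g (a + b) = alpha g a + alpha g b /\
         alpha g (a * b) = alpha g a * alpha g b),
      (forall g a b, inI (one (ginv g)) a -> inI (one (ginv g)) b ->
         alpha g a = alpha g b -> a = b),
      (forall g c, inI (one g) c -> exists2 a, inI (one (ginv g)) a & alpha g a = c) &
    [/\
        (forall x a, inI (one (gid x)) a -> alpha (gid x) a = a) &
        (forall g h, src g = tgt h -> forall a, inI (one (ginv h)) a ->
           inI (one (ginv g)) (alpha h a) -> inI (one h) (alpha h a) ->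
           inI (one (ginv (gmul g h))) a /\ alpha g (alpha h a) = alpha (gmul g h) a)]]].

Definition group_type (G : groupoid) (S : comPzRingType) (one : mor G -> S) : Prop :=
  exists x : obj G, exists tau : obj G -> mor G,
    [/\ tau x = gid x,
        (forall y, src (tau y) = x /\ tgt (tau y) = y),
        (forall y a, inI (one (ginv (tau y))) a <-> inI (one (gid x)) a) &
        (forall y a, inI (one (tau y)) a <-> inI (one (gid y)) a)].

Definition direct_sum_objects (G : groupoid) (S : comPzRingType) (one : mor G -> S) : Prop :=
  (forall a : S, exists f : obj G -> S,
      (forall y, inI (one (gid y)) (f y)) /\ a = \sum_(y : obj G) f y) /\
  (forall f : obj G -> S, (forall y, inI (one (gid y)) (f y)) ->
      \sum_(y : obj G) f y = 0 -> forall y, f y = 0).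

(* A^beta \subseteq A is a beta-partial Galois extension, for the partial action
   beta = (S_g, alpha_g)_{g in K} of the subgroupoid K (a set of morphisms) on the
   ring A (a subset of S): there are a_i, b_i in A with
   sum_i a_i beta_g(b_i 1_{g^-1}) = delta_{z,g} 1_z for all z in K_0, g in K. *)
Definition partial_galois (G : groupoid) (S : comPzRingType) (K : pred (mor G))
    (A : S -> Prop) (one : mor G -> S) (alpha : mor G -> S -> S) : Prop :=
  exists m : nat, exists a b : 'I_m -> S,
    (forall i, A (a i) /\ A (b i)) /\
    (forall g, K g ->
       \sum_(i < m) a i * alpha g (b i * one (ginv g)) =
         if is_ident g then one g else 0).

Definition isotropy (G : groupoid) (y : obj G) : pred (mor G) :=
  [pred g | (src g == y) && (tgt g == y)].

(* Multiplying a Galois coordinate system a_i, b_i of S by the unit 1_y of S_y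
   gives one for S_y: for g in G(y) both 1_{g^-1} and alpha_g(b_i 1_{g^-1}) lie
   in S_y, so 1_y can be moved inside the defining sums without changing them. *)
From mathcomp Require Import all_boot all_order all_algebra.
Local Open Scope ring_scope.
Import GRing.Theory.

Section UnitalPartialAction.

Variables (G : groupoid) (S : comPzRingType).
Variables (one : mor G -> S) (alpha : mor G -> S -> S).
Hypothesis upa : unital_partial_action one alpha.

Lemma inI_mul_one_tgt g c :
  inI (one g) c -> c * one (gid (tgt g)) = c.
Proof.
have [idem_one sub_tgt _ _] := upa.
by move=> /sub_tgt [d ->]; rewrite -mulrA idem_one.
Qed.

Lemma one_inv_mul_one_src g :
  one (ginv g) * one (gid (src g)) = one (ginv g).
Proof.
by rewrite -tgt_inv inI_mul_one_tgt //; exists 1; rewrite mul1r.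
Qed.

Lemma alpha_mul_one_tgt g b :
  alpha g (b * one (ginv g)) * one (gid (tgt g)) = alpha g (b * one (ginv g)).
Proof.
have [_ _ alpha_in _] := upa.
by apply: inI_mul_one_tgt; apply: alpha_in; exists b.
Qed.

Lemma partial_galois_isotropy (K : pred (mor G)) (A : S -> Prop) y :
  {subset isotropy y <= K} -> partial_galois K A one alpha ->
  partial_galois (isotropy y) (inI (one (gid y))) one alpha.
Proof.
move=> subK [m [a [b [_ galK]]]].
exists m, (fun i => a i * one (gid y)), (fun i => b i * one (gid y)).
split=> [i | g Gy_g]; first by split; [exists (a i) | exists (b i)].
move: (Gy_g) => /andP [/eqP src_g /eqP tgt_g].
rewrite -(galK g (subK g Gy_g)); apply: eq_bigr => i _.
rewrite -(mulrA (b i)) [one (gid y) * _]mulrC -src_g one_inv_mul_one_src.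
by rewrite -mulrA [one (gid _) * _]mulrC src_g -tgt_g alpha_mul_one_tgt.
Qed.

End UnitalPartialAction.

Theorem lemma5p1 (G : groupoid) (S : comPzRingType)
    (one : mor G -> S) (alpha : mor G -> S -> S) :
  connected_groupoid G ->
  unital_partial_action one alpha ->
  group_type one ->
  direct_sum_objects one ->
  (forall g, one g != 0) ->
  partial_galois predT (fun _ => True) one alpha ->
  forall y : obj G,
    partial_galois (isotropy y) (inI (one (gid y))) one alpha.
Proof.
move=> _ upa _ _ _ galG y.
exact: partial_galois_isotropy upa _ _ y (fun g _ => isT) galG.
Qed.
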